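(* Let $K\ge2$, $\theta>1$, $T>0$, and let $\xi_1,\dots,\xi_K$ be $C^1$ real functions on $[T,\infty)$ satisfying, for all $t\ge T$, $$\dot\xi_1=-t^{-1}\gamma_1\big(e^{-(\xi_2-\xi_1)}-1\big)+O(t^{-\theta}),$$ $$\dot\xi_k=t^{-1}\Big(\gamma_{k-1}\big(e^{-(\xi_k-\xi_{k-1})}-1\big)-\gamma_k\big(e^{-(\xi_{k+1}-\xi_k)}-1\big)\Big)+O(t^{-\theta}),\quad 2\le k\le K-1,$$ $$\dot\xi_K=t^{-1}\gamma_{K-1}\big(e^{-(\xi_K-\xi_{K-1})}-1\big)+O(t^{-\theta}),$$ where $\gamma_k=\frac{k(K-k)}{2}$ and each $O(t^{-\theta})$ is bounded in absolute value by $Ct^{-\theta}$ for a fixed $C$. Assume moreover that $\sup_{t\ge T}|\sum_{k=1}^K\xi_k(t)|<\infty$. Then there exists $M>0$ with $|\xi_k(t)|\le M$ for all $k=1,\dots,K$ and all $t\ge T$. *)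

From Stdlib Require Import Reals Lra.
Open Scope R_scope.

Definition has_deriv_within (T : R) (f : R -> R) (t l : R) : Prop :=
  forall eps : R, 0 < eps -> exists delta : R, 0 < delta /\
    forall s : R, T <= s -> s <> t -> Rabs (s - t) < delta ->
      Rabs ((f s - f t) / (s - t) - l) < eps.

Definition continuous_within (T : R) (g : R -> R) (t : R) : Prop :=
  forall eps : R, 0 < eps -> exists delta : R, 0 < delta /\
    forall s : R, T <= s -> Rabs (s - t) < delta -> Rabs (g s - g t) < eps.

Definition C1_on (T : R) (f f' : R -> R) : Prop :=
  forall t : R, T <= t -> has_deriv_within T f t (f' t) /\ continuous_within T f' t.

Definition gam (K k : nat) : R := INR k * (INR K - INR k) / 2.

From Stdlib Require Import Reals Lra Lia.
From Coquelicot Require Import Coquelicot.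
Open Scope R_scope.

(* Write d_j = xi_(j+1) - xi_j and F_j = gamma_j (1 - exp (- d_j)), so that F_0 = F_K = 0 and
   xi_k' = (F_k - F_(k-1)) / t + O(t^-theta).  The Lyapunov function
   P = sum_j gamma_j (exp (- d_j) + d_j) satisfies P' = sum_j F_j d_j', which summation by
   parts turns into sum_k xi_k' (F_(k-1) - F_k); completing the square bounds each summand
   by C^2 t^(1 - 2 theta) / 4.  Since theta > 1 this is integrable, so P stays bounded,
   hence so does every gap d_j, and together with the bounded sum of the xi_k this bounds
   every xi_k. *)

(* Freezing [f] left of [T] turns derivatives relative to [T, +oo) into two-sided ones at
   interior points, so the two-sided mean value theorem applies on [T, t]. *)
Lemma is_derive_clamp (T : R) (f : R -> R) (t l : R) :
  T < t -> has_deriv_within T f t l -> is_derive (fun s => f (Rmax T s)) t l.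
Proof.
  intros Ht Hf. apply is_derive_Reals. intros eps Heps.
  destruct (Hf eps Heps) as [d [Hd Hquot]].
  assert (Hpos : 0 < Rmin d (t - T)) by (apply Rmin_glb_lt; lra).
  exists (mkposreal _ Hpos); simpl; intros h Hh Hhd.
  pose proof (Rmin_l d (t - T)); pose proof (Rmin_r d (t - T)).
  assert (Hlow : T <= t + h) by (pose proof (Rle_abs (- h)); rewrite Rabs_Ropp in *; lra).
  rewrite (Rmax_right T (t + h)), (Rmax_right T t) by lra.
  replace h with (t + h - t) at 2 by ring.
  apply Hquot; replace (t + h - t) with h by ring; lra.
Qed.

Lemma has_deriv_within_continuous_within (T : R) (f : R -> R) (t l : R) :
  has_deriv_within T f t l -> continuous_within T f t.
Proof.
  intros Hf eps Heps.
  destruct (Hf 1 Rlt_0_1) as [d [Hd Hquot]].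
  pose proof (Rabs_pos l).
  set (r := Rmin d (eps / (Rabs l + 1))).
  assert (Hr : 0 < r) by (apply Rmin_glb_lt; [lra | apply Rdiv_lt_0_compat; lra]).
  exists r; split; [exact Hr |]; intros s Hs Hst.
  destruct (Req_dec s t) as [-> | Hne].
  { unfold Rminus; rewrite Rplus_opp_r, Rabs_R0; lra. }
  assert (Hq : Rabs ((f s - f t) / (s - t)) <= Rabs l + 1).
  { pose proof (Hquot s Hs Hne (Rlt_le_trans _ _ _ Hst (Rmin_l _ _))) as Hql.
    pose proof (Rabs_triang_inv ((f s - f t) / (s - t)) l). lra. }
  assert (Hsmall : Rabs (s - t) * (Rabs l + 1) < eps).
  { apply (Rmult_lt_reg_r (/ (Rabs l + 1))); [apply Rinv_0_lt_compat; lra |].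
    rewrite Rmult_assoc, Rinv_r, Rmult_1_r by lra.
    exact (Rlt_le_trans _ _ _ Hst (Rmin_r _ _)). }
  replace (f s - f t) with ((f s - f t) / (s - t) * (s - t)) by (field; lra).
  rewrite Rabs_mult. pose proof (Rabs_pos (s - t)). nra.
Qed.

Lemma Rabs_Rmax_sub_le (T s t : R) : T <= t -> Rabs (Rmax T s - t) <= Rabs (s - t).
Proof.
  intros Ht. unfold Rmax. destruct (Rle_dec T s); [lra |].
  rewrite !Rabs_left1; lra.
Qed.

Lemma continuity_pt_clamp (T : R) (f : R -> R) (t : R) :
  T <= t -> continuous_within T f t -> continuity_pt (fun s => f (Rmax T s)) t.
Proof.
  intros Ht Hf eps Heps.
  destruct (Hf eps Heps) as [d [Hd Hclose]].
  exists d; split; [exact Hd |]; intros s [_ Hs]; simpl in *; unfold R_dist in *.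
  rewrite (Rmax_right T t) by lra.
  apply Hclose; [apply Rmax_l |].
  exact (Rle_lt_trans _ _ _ (Rabs_Rmax_sub_le T s t Ht) Hs).
Qed.

Lemma is_derive_sum_f_R0 (F : nat -> R -> R) (d : nat -> R) (x : R) (n : nat) :
  (forall i, (i <= n)%nat -> is_derive (F i) x (d i)) ->
  is_derive (fun s => sum_f_R0 (fun i => F i s) n) x (sum_f_R0 d n).
Proof.
  intros HF. rewrite <- sum_n_Reals.
  apply (is_derive_ext (fun s => sum_n (fun i => F i s) n)).
  - intros s; apply sum_n_Reals.
  - exact (is_derive_sum_n F n x d HF).
Qed.

Lemma is_derive_exp_neg_add (g : R -> R) (x l : R) :
  is_derive g x l -> is_derive (fun s => exp (- g s) + g s) x ((1 - exp (- g x)) * l).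
Proof.
  intros Hg.
  replace ((1 - exp (- g x)) * l) with (scal l (1 - exp (- g x))) by (cbn; unfold mult; cbn; ring).
  apply (is_derive_comp (fun d => exp (- d) + d) g x); [| exact Hg].
  auto_derive; [exact I | ring].
Qed.

Lemma Rle_of_derive_nonpos (g g' : R -> R) (a b : R) :
  a <= b ->
  (forall x, a < x < b -> is_derive g x (g' x)) ->
  (forall x, a <= x <= b -> continuity_pt g x) ->
  (forall x, a <= x <= b -> g' x <= 0) ->
  g b <= g a.
Proof.
  intros Hab Hder Hcont Hneg.
  destruct (MVT_gen g a b g') as [c [Hc Hmvt]];
    rewrite ?Rmin_left, ?Rmax_right in * by lra; auto.
  pose proof (Hneg c Hc). nra.
Qed.

Lemma sum_f_R0_by_parts (a G : nat -> R) (n : nat) :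
  sum_f_R0 (fun i => a (S i) * (G i - G (S i))) (S n) =
  a 1%nat * G 0%nat - a (S (S n)) * G (S (S n)) +
  sum_f_R0 (fun i => G (S i) * (a (S (S i)) - a (S i))) n.
Proof.
  induction n as [| n IH]; [simpl; ring |].
  rewrite tech5, IH. simpl. ring.
Qed.

Lemma sum_f_R0_ge_term (f : nat -> R) (n j : nat) :
  (forall i, (i <= n)%nat -> 0 <= f i) -> (j <= n)%nat -> f j <= sum_f_R0 f n.
Proof.
  induction n as [| n IH]; intros Hf Hj; simpl.
  - replace j with 0%nat by lia. lra.
  - pose proof (Hf (S n) (le_n _)).
    destruct (Nat.eq_dec j (S n)) as [-> | Hne].
    + assert (0 <= sum_f_R0 f n).
      { pose proof (sum_Rle (fun _ => 0) f n (fun i Hi => Hf i ltac:(lia))).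
        rewrite sum_cte in *. lra. }
      lra.
    + pose proof (IH (fun i Hi => Hf i ltac:(lia)) ltac:(lia)). lra.
Qed.

(* If [a = e - g / x] with [|e| <= c], then [a g <= c |g| - g^2 / x <= c^2 x / 4]. *)
Lemma Rmult_le_of_Rabs_add_div_le (a g x c : R) :
  0 < x -> Rabs (a + g / x) <= c -> a * g <= c * c * x / 4.
Proof.
  intros Hx He.
  replace g with (x * (g / x)) by (field; lra).
  generalize (g / x) He; clear g He; intros y He.
  assert (Hay : a * y <= c * Rabs y - y * y).
  { pose proof (Rle_abs ((a + y) * y)). rewrite Rabs_mult in *.
    pose proof (Rmult_le_compat_r (Rabs y) _ _ (Rabs_pos y) He). nra. }
  assert (Hyy : Rabs y * Rabs y = y * y) by (rewrite <- Rabs_mult; apply Rabs_pos_eq, Rle_0_sqr).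
  pose proof (Rle_0_sqr (Rabs y - c / 2)). unfold Rsqr in *.
  assert (a * y <= c * c / 4) by nra.
  nra.
Qed.

Lemma sum_mul_diff_le_of_approx_diff (n : nat) (x c : R) (a G : nat -> R) :
  0 < x -> G 0%nat = 0 -> G (S (S n)) = 0 ->
  (forall k, (1 <= k <= S (S n))%nat -> Rabs (a k - / x * (G k - G (k - 1)%nat)) <= c) ->
  sum_f_R0 (fun i => G (S i) * (a (S (S i)) - a (S i))) n <= INR (S (S n)) * (c * c * x / 4).
Proof.
  intros Hx HG0 HGn Ha.
  pose proof (sum_f_R0_by_parts a G n) as Hparts. rewrite HG0, HGn in Hparts.
  replace (sum_f_R0 (fun i => G (S i) * (a (S (S i)) - a (S i))) n)
    with (sum_f_R0 (fun i => a (S i) * (G i - G (S i))) (S n)) by lra.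
  rewrite <- (Rmult_comm (c * c * x / 4)), <- sum_cte.
  apply sum_Rle; intros i Hi.
  apply Rmult_le_of_Rabs_add_div_le; [exact Hx |].
  pose proof (Ha (S i) ltac:(lia)) as Hai. replace (S i - 1)%nat with i in Hai by lia.
  replace (a (S i) + (G i - G (S i)) / x) with (a (S i) - / x * (G (S i) - G i)) by (field; lra).
  exact Hai.
Qed.

Lemma exp_neg_add_ge_1 (d : R) : 1 <= exp (- d) + d.
Proof. pose proof (exp_ineq1_le (- d)). lra. Qed.

(* For [d < 0], [exp (- d) >= (1 - d / 2)^2] gives [d^2 / 4 <= Q - 1]. *)
Lemma Rabs_le_of_exp_neg_add_le (d Q : R) : exp (- d) + d <= Q -> Rabs d <= 1 + 4 * Q.
Proof.
  intros HQ. pose proof (exp_neg_add_ge_1 d).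
  destruct (Rle_dec 0 d).
  - rewrite Rabs_right by lra. pose proof (exp_pos (- d)). lra.
  - rewrite Rabs_left by lra.
    assert (Hsq : exp (- d) = exp (- d / 2) * exp (- d / 2))
      by (rewrite <- exp_plus; f_equal; field).
    pose proof (exp_ineq1_le (- d / 2)).
    assert (exp (- d) >= (1 - d / 2) * (1 - d / 2)) by (rewrite Hsq; nra).
    nra.
Qed.

Lemma gam_0 (K : nat) : gam K 0 = 0.
Proof. unfold gam; simpl; field. Qed.

Lemma gam_diag (K : nat) : gam K K = 0.
Proof. unfold gam; field. Qed.

Lemma gam_ge_half (K j : nat) : (1 <= j)%nat -> (j + 1 <= K)%nat -> / 2 <= gam K j.
Proof.
  intros Hj HjK. unfold gam.
  assert (1 <= INR j) by (apply (le_INR 1); lia).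
  assert (INR j + 1 <= INR K) by (rewrite <- S_INR; apply le_INR; lia).
  nra.
Qed.

Lemma Rabs_sub_le_of_gaps (u : nat -> R) (D : R) (j m : nat) :
  (forall i, (j <= i < j + m)%nat -> Rabs (u (S i) - u i) <= D) ->
  Rabs (u (j + m)%nat - u j) <= INR m * D.
Proof.
  induction m as [| m IH]; intros Hgap.
  - rewrite Nat.add_0_r, Rminus_diag, Rabs_R0. simpl. lra.
  - rewrite Nat.add_succ_r, S_INR.
    pose proof (Rabs_triang (u (S (j + m)) - u (j + m)%nat) (u (j + m)%nat - u j)).
    replace (u (S (j + m)) - u (j + m)%nat + (u (j + m)%nat - u j))
      with (u (S (j + m)) - u j) in * by ring.
    pose proof (Hgap (j + m)%nat ltac:(lia)).
    pose proof (IH (fun i Hi => Hgap i ltac:(lia))).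
    lra.
Qed.

Lemma Rabs_sub_le_of_gaps_between (u : nat -> R) (n : nat) (D : R) (p q : nat) :
  0 <= D ->
  (forall i, (1 <= i < n)%nat -> Rabs (u (S i) - u i) <= D) ->
  (1 <= p <= n)%nat -> (1 <= q <= n)%nat -> Rabs (u q - u p) <= INR n * D.
Proof.
  intros HD Hgap.
  assert (Hle : forall p q, (1 <= p <= q)%nat -> (q <= n)%nat -> Rabs (u q - u p) <= INR n * D).
  { clear p q; intros p q Hp Hq.
    pose proof (Rabs_sub_le_of_gaps u D p (q - p) (fun i Hi => Hgap i ltac:(lia))) as Htel.
    replace (p + (q - p))%nat with q in Htel by lia.
    assert (INR (q - p) <= INR n) by (apply le_INR; lia).
    nra. }
  intros Hp Hq. destruct (Nat.le_gt_cases p q).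
  - apply Hle; lia.
  - rewrite Rabs_minus_sym. apply Hle; lia.
Qed.

(* [n u_k] is the sum of the [u_i] plus the sum of the differences [u_k - u_i]. *)
Lemma Rabs_le_of_gaps_of_sum (u : nat -> R) (n : nat) (B D : R) :
  0 <= D ->
  (forall i, (1 <= i < n)%nat -> Rabs (u (S i) - u i) <= D) ->
  Rabs (sum_f_R0 (fun i => u (S i)) (n - 1)) <= B ->
  forall k, (1 <= k <= n)%nat -> Rabs (u k) <= B + INR n * (INR n * D).
Proof.
  intros HD Hgap Hsum k Hk.
  assert (Hn : 1 <= INR n) by (apply (le_INR 1); lia).
  assert (Hsplit : INR n * u k = sum_f_R0 (fun i => u (S i)) (n - 1)
                                  + sum_f_R0 (fun i => u k - u (S i)) (n - 1)).
  { rewrite minus_sum, sum_cte. replace (S (n - 1)) with n by lia. ring. }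
  assert (Hdiff : Rabs (sum_f_R0 (fun i => u k - u (S i)) (n - 1)) <= INR n * (INR n * D)).
  { eapply Rle_trans; [apply Rsum_abs |].
    eapply Rle_trans; [apply (sum_Rle _ (fun _ => INR n * D)) |].
    - intros i Hi. rewrite Rabs_minus_sym.
      apply (Rabs_sub_le_of_gaps_between u n D); [exact HD | exact Hgap | lia | lia].
    - rewrite sum_cte. replace (S (n - 1)) with n by lia. lra. }
  pose proof (Rabs_triang (sum_f_R0 (fun i => u (S i)) (n - 1))
                          (sum_f_R0 (fun i => u k - u (S i)) (n - 1))) as Htri.
  rewrite <- Hsplit, Rabs_mult, (Rabs_right (INR n)) in Htri by lra.
  pose proof (Rabs_pos (u k)). pose proof (Rabs_pos (sum_f_R0 (fun i => u (S i)) (n - 1))).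
  nra.
Qed.

Section Lyapunov.

Variables (K : nat) (T : R) (xi xi' : nat -> R -> R).
Hypothesis hK : (2 <= K)%nat.
Hypothesis hC1 : forall k, (1 <= k <= K)%nat -> C1_on T (xi k) (xi' k).

Definition gap (j : nat) (t : R) : R := xi (S j) t - xi j t.

Definition flux (j : nat) (t : R) : R := gam K j * (1 - exp (- gap j t)).

Definition lyapunov (t : R) : R :=
  sum_f_R0 (fun i => gam K (S i) * (exp (- gap (S i) t) + gap (S i) t)) (K - 2).

Definition lyapunov_rate (t : R) : R :=
  sum_f_R0 (fun i => flux (S i) t * (xi' (S (S i)) t - xi' (S i) t)) (K - 2).

Lemma is_derive_gap_clamp (j : nat) (x : R) :
  (1 <= j <= K - 1)%nat -> T < x ->
  is_derive (fun s => gap j (Rmax T s)) x (xi' (S j) x - xi' j x).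
Proof.
  intros Hj Hx. unfold gap.
  apply (is_derive_minus (fun s => xi (S j) (Rmax T s)) (fun s => xi j (Rmax T s)));
    apply is_derive_clamp; try lra; apply hC1; lia || lra.
Qed.

Lemma continuity_pt_gap_clamp (j : nat) (x : R) :
  (1 <= j <= K - 1)%nat -> T <= x -> continuity_pt (fun s => gap j (Rmax T s)) x.
Proof.
  intros Hj Hx. unfold gap.
  apply continuity_pt_minus; apply continuity_pt_clamp; try lra;
    eapply has_deriv_within_continuous_within; apply hC1; lia || lra.
Qed.

Lemma is_derive_lyapunov_clamp (x : R) :
  T < x -> is_derive (fun s => lyapunov (Rmax T s)) x (lyapunov_rate x).
Proof.
  intros Hx. unfold lyapunov, lyapunov_rate.
  apply (is_derive_sum_f_R0
    (fun i s => gam K (S i) * (exp (- gap (S i) (Rmax T s)) + gap (S i) (Rmax T s)))).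
  intros i Hi.
  pose proof (is_derive_exp_neg_add _ x _ (is_derive_gap_clamp (S i) x ltac:(lia) Hx)) as Hd.
  cbv beta in Hd. rewrite (Rmax_right T x) in Hd by lra.
  replace (flux (S i) x * (xi' (S (S i)) x - xi' (S i) x))
    with (scal (gam K (S i)) ((1 - exp (- gap (S i) x)) * (xi' (S (S i)) x - xi' (S i) x)))
    by (unfold flux; cbn; unfold mult; cbn; ring).
  exact (is_derive_scal _ x (gam K (S i)) _ Hd).
Qed.

Lemma continuity_pt_lyapunov_clamp (x : R) :
  T <= x -> continuity_pt (fun s => lyapunov (Rmax T s)) x.
Proof.
  intros Hx. unfold lyapunov.
  apply (continuity_pt_finite_SF
    (fun i s => gam K (S i) * (exp (- gap (S i) (Rmax T s)) + gap (S i) (Rmax T s)))).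
  intros i Hi.
  apply (continuity_pt_comp (fun s => gap (S i) (Rmax T s)) (fun d => gam K (S i) * (exp (- d) + d))).
  - exact (continuity_pt_gap_clamp (S i) x ltac:(lia) Hx).
  - apply derivable_continuous_pt. reg.
Qed.

Lemma flux_0 (t : R) : flux 0 t = 0.
Proof. unfold flux. rewrite gam_0. ring. Qed.

Lemma flux_last (t : R) : flux K t = 0.
Proof. unfold flux. rewrite gam_diag. ring. Qed.

Lemma lyapunov_rate_le (x c : R) :
  0 < x ->
  (forall k, (1 <= k <= K)%nat -> Rabs (xi' k x - / x * (flux k x - flux (k - 1) x)) <= c) ->
  lyapunov_rate x <= INR K * (c * c * x / 4).
Proof.
  intros Hx Hrate.
  assert (HK : S (S (K - 2)) = K) by lia.
  pose proof (sum_mul_diff_le_of_approx_diff (K - 2) x c (fun k => xi' k x) (fun k => flux k x) Hx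
                (flux_0 x)) as Hsum.
  rewrite HK in Hsum. exact (Hsum (flux_last x) Hrate).
Qed.

Lemma lyapunov_term_le (j : nat) (t : R) :
  (1 <= j <= K - 1)%nat -> gam K j * (exp (- gap j t) + gap j t) <= lyapunov t.
Proof.
  intros Hj. unfold lyapunov.
  assert (Hle := sum_f_R0_ge_term
    (fun i => gam K (S i) * (exp (- gap (S i) t) + gap (S i) t)) (K - 2) (j - 1)).
  cbv beta in Hle. replace (S (j - 1)) with j in Hle by lia.
  apply Hle; [| lia].
  intros i Hi. apply Rmult_le_pos.
  - pose proof (gam_ge_half K (S i) ltac:(lia) ltac:(lia)). lra.
  - pose proof (exp_neg_add_ge_1 (gap (S i) t)). lra.
Qed.

Variables theta C : R.
Hypothesis htheta : 1 < theta.
Hypothesis hT : 0 < T.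
Hypothesis hrate : forall k, (1 <= k <= K)%nat -> forall t, T <= t ->
  Rabs (xi' k t - / t * (flux k t - flux (k - 1) t)) <= C * Rpower t (- theta).

(* The rate is [O(t^(1 - 2 theta))]; adding [A t^(2 - 2 theta)] compensates it exactly. *)
Lemma lyapunov_bounded : exists P, forall t, T <= t -> lyapunov t <= P.
Proof.
  set (e := 2 - 2 * theta).
  set (A := INR K * (C * C) / 4 / (2 * theta - 2)).
  assert (HA : 0 <= A).
  { unfold A. apply Rmult_le_pos; [| left; apply Rinv_0_lt_compat; lra].
    apply Rmult_le_pos; [| lra].
    apply Rmult_le_pos; [apply pos_INR | apply Rle_0_sqr]. }
  exists (lyapunov T + A * Rpower T e). intros t Ht.
  assert (Hmono : lyapunov (Rmax T t) + A * Rpower t e <= lyapunov (Rmax T T) + A * Rpower T e).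
  { apply (Rle_of_derive_nonpos (fun s => lyapunov (Rmax T s) + A * Rpower s e)
             (fun s => lyapunov_rate s + A * (e * Rpower s (e - 1)))); [exact Ht | | |].
    - intros x Hx.
      apply (is_derive_plus (fun s => lyapunov (Rmax T s)) (fun s => A * Rpower s e)).
      + apply is_derive_lyapunov_clamp; lra.
      + apply is_derive_scal, is_derive_Reals, derivable_pt_lim_power. lra.
    - intros x Hx. apply continuity_pt_plus.
      + apply continuity_pt_lyapunov_clamp; lra.
      + apply continuity_pt_scal, derivable_continuous_pt.
        exists (e * Rpower x (e - 1)). apply derivable_pt_lim_power. lra.
    - intros x Hx.
      pose proof (lyapunov_rate_le x (C * Rpower x (- theta)) ltac:(lra)
                    (fun k Hk => hrate k Hk x ltac:(lra))).
      assert (Hcancel : INR K * (C * Rpower x (- theta) * (C * Rpower x (- theta)) * x / 4)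
                        + A * (e * Rpower x (e - 1)) = 0).
      { unfold e, A. replace (2 - 2 * theta - 1) with (- theta + - theta + 1) by ring.
        rewrite !Rpower_plus, Rpower_1 by lra. field. lra. }
      lra. }
  rewrite !Rmax_right in Hmono by lra.
  assert (0 <= A * Rpower t e) by (apply Rmult_le_pos; [exact HA | left; apply exp_pos]).
  lra.
Qed.

Lemma gap_bounded :
  exists D, 0 <= D /\ forall j, (1 <= j <= K - 1)%nat -> forall t, T <= t -> Rabs (gap j t) <= D.
Proof.
  destruct lyapunov_bounded as [P HP].
  assert (Hgap : forall j, (1 <= j <= K - 1)%nat -> forall t, T <= t ->
                   Rabs (gap j t) <= 1 + 4 * (2 * P)).
  { intros j Hj t Ht. apply Rabs_le_of_exp_neg_add_le.
    pose proof (lyapunov_term_le j t Hj). pose proof (HP t Ht).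
    pose proof (gam_ge_half K j ltac:(lia) ltac:(lia)).
    pose proof (exp_neg_add_ge_1 (gap j t)).
    nra. }
  exists (1 + 4 * (2 * P)). split; [| exact Hgap].
  pose proof (Hgap 1%nat ltac:(lia) T (Rle_refl T)). pose proof (Rabs_pos (gap 1 T)). lra.
Qed.

End Lyapunov.

Theorem mainTheorem13 (K : nat) (theta T C : R)
  (xi xi' : nat -> R -> R)
  (hK : (2 <= K)%nat) (htheta : 1 < theta) (hT : 0 < T)
  (hC1 : forall k : nat, (1 <= k <= K)%nat -> C1_on T (xi k) (xi' k))
  (h1 : forall t : R, T <= t ->
     Rabs (xi' 1%nat t
           - (- / t * gam K 1 * (exp (- (xi 2%nat t - xi 1%nat t)) - 1)))
       <= C * Rpower t (- theta))
  (hmid : forall k : nat, (2 <= k <= K - 1)%nat -> forall t : R, T <= t ->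
     Rabs (xi' k t
           - / t * (gam K (k - 1) * (exp (- (xi k t - xi (k - 1)%nat t)) - 1)
                    - gam K k * (exp (- (xi (k + 1)%nat t - xi k t)) - 1)))
       <= C * Rpower t (- theta))
  (hlast : forall t : R, T <= t ->
     Rabs (xi' K t
           - / t * gam K (K - 1) * (exp (- (xi K t - xi (K - 1)%nat t)) - 1))
       <= C * Rpower t (- theta))
  (hsum : exists B : R, forall t : R, T <= t ->
     Rabs (sum_f_R0 (fun i => xi (S i) t) (K - 1)) <= B) :
  exists M : R, 0 < M /\
    forall k : nat, (1 <= k <= K)%nat -> forall t : R, T <= t -> Rabs (xi k t) <= M.
Proof.
  destruct hsum as [B hB].
  assert (hrate : forall k, (1 <= k <= K)%nat -> forall t, T <= t ->
    Rabs (xi' k t - / t * (flux K xi k t - flux K xi (k - 1) t)) <= C * Rpower t (- theta)).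
  { intros k Hk t Ht. unfold flux, gap.
    destruct (Nat.eq_dec k 1) as [-> | Hk1]; [| destruct (Nat.eq_dec k K) as [-> | HkK]].
    - rewrite gam_0. eapply Rle_trans; [| exact (h1 t Ht)]. right. f_equal. ring.
    - rewrite gam_diag. replace (S (K - 1)) with K by lia.
      eapply Rle_trans; [| exact (hlast t Ht)]. right. f_equal. ring.
    - replace (S (k - 1)) with k by lia.
      eapply Rle_trans; [| exact (hmid k ltac:(lia) t Ht)]. right.
      rewrite Nat.add_1_r. f_equal. ring. }
  destruct (gap_bounded K T xi xi' hK hC1 theta C htheta hT hrate) as [D [HD Hgap]].
  assert (HB : 0 <= B)
    by (eapply Rle_trans; [apply Rabs_pos | exact (hB T (Rle_refl T))]).
  assert (HKD : 0 <= INR K * (INR K * D)) by (pose proof (pos_INR K); nra).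
  exists (B + INR K * (INR K * D) + 1). split; [lra |].
  intros k Hk t Ht.
  pose proof (Rabs_le_of_gaps_of_sum (fun i => xi i t) K B D HD
                (fun i Hi => Hgap i ltac:(lia) t Ht) (hB t Ht) k Hk).
  lra.
Qed.
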